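(* Let $q>0$, $q\neq1$. For every integer $N\ge 2$, $$\Big(x\frac{d}{dx}-N\Big)H_N(x;q)=2\,[N]_q\,[N-1]_q\,H_{N-2}(x;q).$$
   Context: For $n\ge 0$ let $[n]_q=\frac{q^n-1}{q-1}$, $[0]_q!=1$, $[n]_q!=[1]_q\cdots[n]_q$, and $e_q(z)=\sum_{n\ge0}z^n/[n]_q!$. The $q$-Hermite polynomials $H_N(x;q)$ are defined by the identity of formal power series in $t$: $e^{-t^2}e_q([2]_q t x)=\sum_{N\ge0}H_N(x;q)\,t^N/[N]_q!$. *)

From HB Require Import structures.
From mathcomp Require Import all_boot all_order all_algebra.
Set Implicit Arguments. Unset Strict Implicit. Unset Printing Implicit Defensive.
Import Order.TTheory GRing.Theory Num.Theory.
Local Open Scope ring_scope.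

Definition qint (R : realFieldType) (q : R) (n : nat) : R := (q ^+ n - 1) / (q - 1).

Definition qfact (R : realFieldType) (q : R) (n : nat) : R :=
  \prod_(1 <= i < n.+1) qint q i.

(* coefficient of t^j in e^{-t^2} = sum_k (-1)^k t^(2k) / k! *)
Definition expm_sq_coef (R : realFieldType) (j : nat) : R :=
  if odd j then 0 else (-1) ^+ (j./2) / (j./2)`!%:R.

(* coefficient of t^m in e_q([2]_q t x), as a polynomial in x:
   [2]_q^m x^m / [m]_q! *)
Definition eq_coef (R : realFieldType) (q : R) (m : nat) : {poly R} :=
  ((qint q 2) ^+ m / qfact q m) *: 'X^m.

(* H_N(x;q) = [N]_q! * (coefficient of t^N in e^{-t^2} e_q([2]_q t x)),
   the coefficient being the Cauchy product of the two series. *)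
Definition qHermite (R : realFieldType) (q : R) (N : nat) : {poly R} :=
  qfact q N *: \sum_(j < N.+1) (expm_sq_coef R j *: eq_coef q (N - j)).

From HB Require Import structures.
From mathcomp Require Import all_boot all_order all_algebra.
From mathcomp Require Import ring.
Import Order.TTheory GRing.Theory Num.Theory.
Local Open Scope ring_scope.

(* The Euler operator x d/dx - N multiplies x^(N-j) by -j.  In H_N the
   monomial x^(N-j) carries the coefficient of t^j in exp(-t^2), and
   -j e_j = 2 e_(j-2) because d/dt exp(-t^2) = -2t exp(-t^2); the remaining
   factor [N]_q!/[N-2]_q! is [N]_q [N-1]_q. *)

Lemma euler_shift_sum (R : comNzRingType) (M : nat) (I : Type) (r : seq I)
    (a : I -> R) (m : I -> nat) :
  'X * (\sum_(i <- r) a i *: 'X^(m i))^`() - M%:R *: \sum_(i <- r) a i *: 'X^(m i)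
  = \sum_(i <- r) (((m i)%:R - M%:R) * a i) *: 'X^(m i).
Proof.
rewrite raddf_sum /= mulr_sumr scaler_sumr -sumrB; apply: eq_bigr => i _.
rewrite derivZ derivXn -scalerAr mulrnAr -scaler_nat !scalerA.
case: (m i) => [|k]; last by rewrite -exprS -scalerBl; congr (_ *: _); ring.
by rewrite mulr0 scale0r sub0r -scaleNr; congr (_ *: _); ring.
Qed.

Lemma expm_sq_coefSS (R : realFieldType) (i : nat) :
  i.+2%:R * expm_sq_coef R i.+2 = - 2 * expm_sq_coef R i.
Proof.
rewrite /expm_sq_coef /= negbK; case: ifP => odd_i; first by rewrite !mulr0.
have -> : i = (i./2).*2 by rewrite -{1}(odd_double_half i) odd_i.
rewrite -doubleS !doubleK -!muln2 factS !natrM exprS invfM.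
have fact_neq0 : (i./2)`!%:R != 0 :> R by rewrite pnatr_eq0 -lt0n fact_gt0.
have succ_neq0 : i./2.+1%:R != 0 :> R by rewrite pnatr_eq0.
by field; rewrite fact_neq0 addrC natr1 succ_neq0.
Qed.

Lemma qfactSS (R : realFieldType) (q : R) (n : nat) :
  qfact q n.+2 = qint q n.+2 * qint q n.+1 * qfact q n.
Proof. by rewrite /qfact big_nat_recr //= big_nat_recr //=; ring. Qed.

Lemma qHermiteE (R : realFieldType) (q : R) (N : nat) :
  qHermite q N = \sum_(j < N.+1)
    (qfact q N * expm_sq_coef R j * (qint q 2 ^+ (N - j) / qfact q (N - j)))
      *: 'X^(N - j).
Proof.
rewrite /qHermite /eq_coef scaler_sumr; apply: eq_bigr => j _.
by rewrite !scalerA mulrA.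
Qed.

Theorem mainTheorem3 (R : realFieldType) (q : R) (hq0 : 0 < q) (hq1 : q != 1)
  (N : nat) (hN : (2 <= N)%N) :
  'X * (qHermite q N)^`() - N%:R *: qHermite q N
  = (2 * qint q N * qint q (N - 1)) *: qHermite q (N - 2).
Proof.
case: N hN => [|[|n]] // _; rewrite !qHermiteE euler_shift_sum !subSS !subn0.
rewrite 2!big_ord_recl /= subn0 subrr mul0r scale0r add0r.
have -> : expm_sq_coef R (bump 0 0) = 0 by [].
rewrite mulr0 mul0r mulr0 scale0r add0r scaler_sumr.
apply: eq_bigr => i _; rewrite /bump /= !add1n !subSS scalerA; congr (_ *: _).
have -> : (n - i)%:R - n.+2%:R = - i.+2%:R :> R.
  by rewrite natrB -1?ltnS // -[n.+2]addn2 -[i.+2]addn2 !natrD; ring.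
transitivity (- (i.+2%:R * expm_sq_coef R i.+2) * qfact q n.+2
              * (qint q 2 ^+ (n - i) / qfact q (n - i))); first ring.
by rewrite expm_sq_coefSS qfactSS; ring.
Qed.
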